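(* Let $V$ be a real vector space of dimension $d$, and $G$ a group of affine-linear transformations of $V$ including all translations. Let $p=\{0\}$ be the one-point convex body consisting of the origin. Then $[p]\in\mathcal{CB}_0(V,G)$ and $\Phi_0(X)=e_0([X])=[p]$ for every $X\in\mathcal{K}(V)$.
   Context: $\mathcal{K}(V)$ is the set of nonempty compact convex subsets of $V$ with the Hausdorff metric topology. $\mathcal{CB}(V,G)$ is the quotient (with quotient topology) of the free Hausdorff topological abelian group $\mathbb{Z}\mathcal{K}(V)$ on $\mathcal{K}(V)$ (the Hausdorff topological abelian group with continuous map $X\mapsto[X]$ through which every continuous map from $\mathcal{K}(V)$ to a Hausdorff topological abelian group factors uniquely via a continuous homomorphism) by the closure of the subgroup generated by all $[B\cup C]-[B]-[C]+[B\cap C]$ ($B,C,B\cup C\in\mathcal{K}(V)$) and all $[X]-[gX]$ ($g\in G$); images are still written $[X]$, and $\Phi(X)=[X]$. The dilation map $D$ is the unique continuous map $[0,\infty)\times\mathcal{CB}(V,G)\to\mathcal{CB}(V,G)$, homomorphism in its second variable, with $D(\lambda,[X])=[\lambda X]$. The dilation components are the uniquely determined continuous maps $\rho_0\colon\mathcal{CB}(V,G)\to\mathcal{CB}(V,G)$ and $\rho_1,\ldots,\rho_d\colon[0,\infty)\times\mathcal{CB}(V,G)\to\mathcal{CB}(V,G)$ with each $\rho_i(-,x)$ ($i\geqslant1$) a semigroup homomorphism on $([0,\infty),+)$ and $D(\lambda,x)=\rho_0(x)+\sum_{i=1}^d\rho_i(\lambda^i,x)$. The idempotents are $e_0=\rho_0$,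 $e_i(x)=\rho_i(1,x)$ ($i\geqslant1$); $\mathcal{CB}_i(V,G)=e_i(\mathcal{CB}(V,G))$ and $\Phi_i=e_i\circ\Phi$. *)

From HB Require Import structures.
From mathcomp Require Import all_boot all_order all_algebra.
From mathcomp Require Import all_classical all_reals all_analysis.
Set Implicit Arguments. Unset Strict Implicit. Unset Printing Implicit Defensive.
Import Order.TTheory GRing.Theory Num.Theory.
Import numFieldNormedType.Exports.
Local Open Scope classical_set_scope.
Local Open Scope ring_scope.

Section CB.
Variables (R : realType) (d : nat).
Local Notation V := 'rV[R]_d.

Definition convex_body (X : set V) : Prop :=
  X !=set0 /\ compact X /\
  (forall x y t, X x -> X y -> 0 <= t <= 1 -> X (t *: x + (1 - t) *: y)).

(* Hausdorff distance between X and Y is < e (for compact X, Y) *)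
Definition hausdorff_lt (X Y : set V) (e : R) : Prop :=
  (forall x, X x -> exists y, Y y /\ `|x - y| < e) /\
  (forall y, Y y -> exists x, X x /\ `|x - y| < e).

Definition hcontinuous (T : topologicalType) (f : set V -> T) : Prop :=
  forall X, convex_body X -> forall U, nbhs (f X) U ->
  exists2 e : R, 0 < e & forall Y, convex_body Y -> hausdorff_lt X Y e -> U (f Y).

Definition affine_group_with_translations (G : set (V -> V)) : Prop :=
  [/\ (forall g, G g -> exists M : 'M[R]_d, exists b : V,
          M \in unitmx /\ forall x, g x = x *m M + b),
      G id,
      (forall g h, G g -> G h -> G (g \o h)),
      (forall g, G g -> exists h, [/\ G h, cancel g h & cancel h g]) &
      (forall b : V, G (fun x => x + b))].

Definition cb_relations (G : set (V -> V)) (H : zmodType) (f : set V -> H) : Prop :=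
  (forall B C, convex_body B -> convex_body C -> convex_body (B `|` C) ->
     f (B `|` C) - f B - f C + f (B `&` C) = 0) /\
  (forall g X, G g -> convex_body X -> f X = f (g @` X)).

(* (A, Phi) is CB(V,G) with Phi(X) = [X], given by its universal property:
   A is a Hausdorff topological abelian group, Phi is continuous on K(V),
   satisfies the relations, and every such map to a Hausdorff topological
   abelian group factors uniquely through a continuous homomorphism. *)
Definition is_CB (G : set (V -> V)) (A : topologicalZmodType) (Phi : set V -> A) : Prop :=
  [/\ hausdorff_space A, hcontinuous Phi, cb_relations G Phi &
    forall (H : topologicalZmodType) (f : set V -> H),
      hausdorff_space H -> hcontinuous f -> cb_relations G f ->
      (exists g : A -> H, [/\ continuous g, (forall x y, g (x + y) = g x + g y) &
                            forall X, convex_body X -> g (Phi X) = f X]) /\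
      (forall g1 g2 : A -> H,
          continuous g1 -> (forall x y, g1 (x + y) = g1 x + g1 y) ->
          (forall X, convex_body X -> g1 (Phi X) = f X) ->
          continuous g2 -> (forall x y, g2 (x + y) = g2 x + g2 y) ->
          (forall X, convex_body X -> g2 (Phi X) = f X) -> g1 = g2)].

(* D is the dilation map [0,oo) x CB -> CB (values at negative lambda irrelevant) *)
Definition is_dilation (A : topologicalZmodType) (Phi : set V -> A) (D : R -> A -> A) : Prop :=
  [/\ {within [set p : R * A | 0 <= p.1], continuous (fun p : R * A => D p.1 p.2)},
      (forall l, 0 <= l -> forall x y, D l (x + y) = D l x + D l y) &
      (forall l X, 0 <= l -> convex_body X -> D l (Phi X) = Phi (( *:%R l) @` X))].

Definition is_dilation_components (A : topologicalZmodType) (D : R -> A -> A)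
    (rho0 : A -> A) (rho : nat -> R -> A -> A) : Prop :=
  [/\ continuous rho0,
      (forall i, (1 <= i <= d)%N ->
         {within [set p : R * A | 0 <= p.1], continuous (fun p : R * A => rho i p.1 p.2)} /\
         (forall a b x, 0 <= a -> 0 <= b -> rho i (a + b) x = rho i a x + rho i b x)) &
      (forall l x, 0 <= l -> D l x = rho0 x + \sum_(1 <= i < d.+1) rho i (l ^+ i) x)].

End CB.

From HB Require Import structures.
From mathcomp Require Import all_boot all_order all_algebra.
From mathcomp Require Import all_classical all_reals all_analysis.
Set Implicit Arguments. Unset Strict Implicit. Unset Printing Implicit Defensive.
Import Order.TTheory GRing.Theory Num.Theory.
Local Open Scope classical_set_scope.
Local Open Scope ring_scope.

(* At [lambda = 0] every term [rho_i(0^i, x)] vanishes, since a semigroup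
   homomorphism on [[0, oo)] maps [0] to [0]; hence [e_0 = D(0, -)]. And
   [D(0, [X]) = [0 X] = [{0}]] because [0 X = {0}] for nonempty [X]. *)

Section DilationAtZero.
Variables (R : realType) (d : nat).
Local Notation V := 'rV[R]_d.

Lemma nonneg_additive0 (M : zmodType) (f : R -> M) :
  (forall a b, 0 <= a -> 0 <= b -> f (a + b) = f a + f b) -> f 0 = 0.
Proof.
move=> fD; have := fD 0 0 (lexx _) (lexx _).
by rewrite addr0 -{1}[f 0]addr0 => /addrI <-.
Qed.

Lemma convex_body_set0 : convex_body [set 0 : V].
Proof.
split; first by exists 0.
split; first exact: compact_set1.
by move=> x y t -> -> _; rewrite !scaler0 addr0.
Qed.

Lemma scale0_image (X : set V) : X !=set0 -> ( *:%R 0) @` X = [set 0].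
Proof.
move=> [y Xy]; apply/seteqP; split => x /=.
  by move=> [z _ <-]; rewrite scale0r.
by move=> ->; exists y => //; rewrite scale0r.
Qed.

Lemma dilation_components0 (A : topologicalZmodType) (D : R -> A -> A)
    (rho0 : A -> A) (rho : nat -> R -> A -> A) :
  is_dilation_components d D rho0 rho -> forall x, D 0 x = rho0 x.
Proof.
move=> [_ rho_add D_sum] x; rewrite D_sum // big_nat_cond big1 ?addr0 //.
move=> i /andP[/andP[i_gt0 i_le] _]; rewrite expr0n gtn_eqF // mulr0n.
have i_range : (1 <= i <= d)%N by rewrite i_gt0 -ltnS.
have [_ rhoD] := rho_add i i_range.
exact: nonneg_additive0 (fun a b => rhoD a b x).
Qed.

End DilationAtZero.

Theorem lemma6p7 (R : realType) (d : nat) (G : set ('rV[R]_d -> 'rV[R]_d))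
  (A : topologicalZmodType) (Phi : set 'rV[R]_d -> A) (D : R -> A -> A)
  (rho0 : A -> A) (rho : nat -> R -> A -> A) :
  affine_group_with_translations G ->
  is_CB G Phi ->
  is_dilation Phi D ->
  is_dilation_components d D rho0 rho ->
  range rho0 (Phi [set 0]) /\
  (forall X : set 'rV[R]_d, convex_body X -> rho0 (Phi X) = Phi [set 0]).
Proof.
move=> _ _ [_ _ D_Phi] comps.
have rho0_Phi X : convex_body X -> rho0 (Phi X) = Phi [set 0].
  move=> cX; rewrite -(dilation_components0 comps) D_Phi //.
  by rewrite scale0_image //; case: cX.
split=> //; exists (Phi [set 0]) => //.
exact/rho0_Phi/convex_body_set0.
Qed.
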